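(* For any $A\in\mathrm{GL}(\mathcal S)$ with $A\notin\mathrm{Inv}(\mathcal S)$, the centralizer of $A$ in $\mathrm{Inv}(\mathcal S)$ is a proper subgroup of $\mathrm{Inv}(\mathcal S)$; i.e. there exists $\varepsilon\in\mathrm{Inv}(\mathcal S)$ with $A\circ\varepsilon\neq\varepsilon\circ A$.
   Context: Work over an algebraically closed field of characteristic $\neq2$. $F(X)=\sum_{i=0}^6f_iX^i$, $f_6\neq0$, distinct roots $\theta_1,\dots,\theta_6$. $P_j(X)=\prod_{i\ne j}(X-\theta_i)$, $\omega_j=P_j(\theta_j)$. Points of $\mathbb P^5$ are identified with $P(X)=\sum_{j=0}^5p_jX^j$; $\pi_j=P(\theta_j)/\omega_j$. $\mathcal S\subset\mathbb P^5$ is defined by $\sum_j\theta_j^i\omega_j\pi_j^2=0$, $i=0,1,2$. $\varepsilon^{(i)}$ is the involution $\pi_j\mapsto(-1)^{\delta_{ij}}\pi_j$; $\mathrm{Inv}(\mathcal S)$ is the group of order 32 generated by them. The 32 lines $\varepsilon(\Delta_0)$, $\varepsilon\in\mathrm{Inv}(\mathcal S)$, with $\Delta_0=\{(p_0:p_1:0:0:0:0)\}$, are all the lines on $\mathcal S$. $\mathrm{GL}(\mathcal S)$ is the group of automorphisms of $\mathcal S$ which are restrictions of projective linear transformations of $\mathbb P^5$. *)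

From HB Require Import structures.
From mathcomp Require Import all_boot all_order all_algebra.
Set Implicit Arguments. Unset Strict Implicit. Unset Printing Implicit Defensive.
Import GRing.Theory.
Local Open Scope ring_scope.

Section KummerDefs.
Variable K : fieldType.
Variable theta : 'I_6 -> K.

(* omega_j = P_j(theta_j) = prod_{i <> j} (theta_j - theta_i) *)
Definition omega (j : 'I_6) : K := \prod_(i < 6 | i != j) (theta j - theta i).

(* Points of P^5: nonzero row vectors v = (p_0,...,p_5), P(X) = sum_k p_k X^k.
   pi_j(v) = P(theta_j) / omega_j *)
Definition piC (v : 'rV[K]_6) (j : 'I_6) : K :=
  (\sum_(k < 6) v ord0 k * theta j ^+ k) / omega j.

Definition inS (v : 'rV[K]_6) : Prop :=
  v != 0 /\ forall i : 'I_3,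
    \sum_(j < 6) theta j ^+ i * omega j * piC v j ^+ 2 = 0.

(* matrix of the linear change of coordinates p |-> pi  (row convention:
   (v *m piMat) 0 j = piC v j) *)
Definition piMat : 'M[K]_6 := \matrix_(k < 6, j < 6) (theta j ^+ k / omega j).

(* eps^(i) : pi_j |-> (-1)^{delta_ij} pi_j, written in p-coordinates
   (points act on the right: v |-> v *m M) *)
Definition epsMx (i : 'I_6) : 'M[K]_6 :=
  piMat *m diag_mx (\row_(j < 6) (if j == i then -1 else 1)) *m invmx piMat.

(* elements of Inv(S): the products of the generators eps^(i), i in s *)
Definition invMx (s : {set 'I_6}) : 'M[K]_6 := \prod_(i in s) epsMx i.

End KummerDefs.

Definition projEq (K : fieldType) (u v : 'rV[K]_6) : Prop :=
  exists c : K, c != 0 /\ u = c *: v.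

(* A linear automorphism of the Kummer surface S that commutes with every
   element of Inv(S) lies in Inv(S); contrapositively, an A in GL(S) outside
   Inv(S) fails to commute with some sign change eps in Inv(S).

   We work in the coordinates pi_j, in which Inv(S) acts by the diagonal sign
   matrices signMx s and S is the intersection of three diagonal quadrics
   sum_j theta_j^k omega_j pi_j^2 = 0 (k < 3).  Let Mpi be the matrix of A in
   these coordinates and suppose A commutes projectively with Inv(S) on S.
   - Lagrange-type identities for the "moment" conditions
     sum_j theta_j^k omega_j y_j = 0 show that a vector satisfying three of
     them and supported on at most four indices a, b, g, h satisfies
     beta_a y_a + beta_b y_b = 0, and vanishes if supported on three indices;
     linear algebra plus square roots then provide points of S with two
     prescribed vanishing coordinates.
   - A point of S fixed by eps^(i) (i.e. with pi_i = 0) is mapped to a point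
     with pi_i = 0, since a point of S cannot be a (-1)-eigenvector of eps^(i).
     Comparing a point with its image under eps^(a) kills Mpi a i (a <> i).
   - For diagonal Mpi, the relation beta_a y_a + beta_b y_b = 0 for y = x^2
     and y = (x Mpi)^2 forces Mpi_aa^2 = Mpi_bb^2, so Mpi = l * signMx s and
     A itself is in Inv(S). *)

From HB Require Import structures.
From mathcomp Require Import all_boot all_order all_algebra ring.
From Stdlib Require Import Classical.
Set Implicit Arguments. Unset Strict Implicit. Unset Printing Implicit Defensive.
Import GRing.Theory.
Local Open Scope ring_scope.

Lemma complete_pair (a b : 'I_6) : a != b -> exists c d g h : 'I_6,
  uniq [:: a; b; c; d; g; h] /\ forall j, j \in [:: a; b; c; d; g; h].
Proof.
move=> ab; set r := enum [predC [:: a; b]].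
have size_r : size r = 4.
  rewrite -cardE; apply/eqP; rewrite -(eqn_add2l #|[:: a; b]|) cardC card_ord.
  by rewrite (card_uniqP _) //= inE andbT.
have uniq_r : uniq r := enum_uniq _.
have mem_r j : (j \in r) = (j \notin [:: a; b]) := mem_enum _ j.
move: r size_r uniq_r mem_r => [|c [|d [|g [|h [|]]]]] //= _ uniq_r mem_r.
exists c, d, g, h; split => [|j].
  rewrite /= uniq_r andbT -[[:: c; d; g; h]]/(c :: [:: d; g; h]).
  have := mem_r a; have := mem_r b; rewrite !inE !eqxx orbT /=.
  by move=> -> ->; rewrite orbF ab.
by have := mem_r j; rewrite !inE; case: (j == a) => //; case: (j == b).
Qed.

Section Moments.
Variable K : fieldType.
Variable theta : 'I_6 -> K.
Hypothesis theta_inj : injective theta.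

Local Notation om := (omega theta).

(* Both the omega_j and the beta's below are products of differences of
   distinct roots, hence nonzero. *)
Lemma theta_sub_neq0 i j : i != j -> theta i - theta j != 0.
Proof. by rewrite subr_eq0; apply: contra => /eqP/theta_inj ->. Qed.

Lemma omega_neq0 j : om j != 0.
Proof. by apply/prodf_neq0 => i ij; rewrite theta_sub_neq0 // eq_sym. Qed.

(* y satisfies the first n moment conditions sum_j theta_j^k omega_j y_j = 0;
   a point x is on S iff y_j = x_j^2 satisfies three of them. *)
Definition moments (n : nat) (y : 'I_6 -> K) : Prop :=
  forall k, (k < n)%N -> \sum_(j < 6) theta j ^+ k * om j * y j = 0.

(* Multiplying by theta_j - theta_q trades one moment condition for a new
   vanishing coordinate (at q). *)
Lemma moments_shift n y q :
  moments n.+1 y -> moments n (fun j => (theta j - theta q) * y j).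
Proof.
move=> my k kn.
have -> : \sum_(j < 6) theta j ^+ k * om j * ((theta j - theta q) * y j) =
    \sum_(j < 6) theta j ^+ k.+1 * om j * y j
  - theta q * \sum_(j < 6) theta j ^+ k * om j * y j.
  by rewrite mulr_sumr -sumrB; apply: eq_bigr => j _; rewrite exprS; ring.
by rewrite !my ?mulr0 ?subrr // ltnW.
Qed.

Definition beta (g h j : 'I_6) : K := om j * ((theta j - theta g) * (theta j - theta h)).

Lemma beta_neq0 g h j : j != g -> j != h -> beta g h j != 0.
Proof. by move=> jg jh; rewrite !mulf_neq0 ?omega_neq0 ?theta_sub_neq0. Qed.

(* A vector with three vanishing moments, supported on {a, b, g, h},
   satisfies beta_a y_a + beta_b y_b = 0 (shift twice, keep k = 0). *)
Lemma moments3_pair y a b g h : moments 3 y -> a != b ->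
  (forall j, j != a -> j != b -> j != g -> j != h -> y j = 0) ->
  beta g h a * y a + beta g h b * y b = 0.
Proof.
move=> my ab supp; have := moments_shift h (moments_shift g my) (ltn0Sn 0).
rewrite (bigD1 a) // (bigD1 b) 1?eq_sym //= big1 ?addr0 => [<-|].
  by congr (_ + _); rewrite /beta; ring.
move=> j /andP[jb ja].
have [->|jg] := eqVneq j g; first by rewrite subrr !(mul0r, mulr0).
have [->|jh] := eqVneq j h; first by rewrite subrr !(mul0r, mulr0).
by rewrite supp // !mulr0.
Qed.

Lemma moments3_vanish y t p q : moments 3 y -> t != p -> t != q ->
  (forall j, j != t -> j != p -> j != q -> y j = 0) -> y t = 0.
Proof.
move=> my tp tq supp.
have := moments3_pair (g := p) (h := q) my tp (fun j jt jp _ jq => supp j jt jp jq).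
rewrite {2}/beta subrr !(mul0r, mulr0) addr0 => /eqP.
by rewrite mulf_eq0 (negbTE (beta_neq0 tp tq)) => /eqP.
Qed.

Lemma moments1_single y i : moments 1 y -> (forall j, j != i -> y j = 0) -> y i = 0.
Proof.
move=> my supp; have := my 0%N isT; rewrite (bigD1 i) //= big1 ?addr0.
  by rewrite expr0 mul1r => /eqP; rewrite mulf_eq0 (negbTE (omega_neq0 i)) => /eqP.
by move=> j ji; rewrite supp ?mulr0.
Qed.

Lemma moments3_support3 y b g h : moments 3 y -> b != g -> b != h -> g != h ->
  (forall j, j != b -> j != g -> j != h -> y j = 0) -> forall j, y j = 0.
Proof.
move=> my bg bh gh supp.
have gb : g != b by rewrite eq_sym.
have hb : h != b by rewrite eq_sym.
have hg : h != g by rewrite eq_sym.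
have yb : y b = 0 by apply: (moments3_vanish my bg bh) => j jb jg jh; apply: supp.
have yg : y g = 0 by apply: (moments3_vanish my gb gh) => j jg jb jh; apply: supp.
have yh : y h = 0 by apply: (moments3_vanish my hb hg) => j jh jb jg; apply: supp.
move=> j; have [->|jb] := eqVneq j b; first by [].
have [->|jg] := eqVneq j g; first by [].
by have [->|jh] := eqVneq j h; last exact: supp.
Qed.

(* Five linear conditions (three moments, two vanishing coordinates) on a
   six-dimensional space leave a nonzero solution. *)
Lemma moments3_kernel c d : exists u : 'rV[K]_6,
  [/\ u != 0, moments 3 (fun j => u ord0 j), u ord0 c = 0 & u ord0 d = 0].
Proof.
pose B : 'M[K]_(6, 5) := \matrix_(j, k)
  (if (k < 3)%N then theta j ^+ k * om j
   else if k == 3 :> nat then (j == c)%:R else (j == d)%:R).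
have [i ui] : exists i, row i (kermx B) != 0.
  apply/existsP; apply: contraT; rewrite negb_exists => /forallP zero_rows.
  have : kermx B == 0.
    by apply/eqP/row_matrixP => i; rewrite row0; apply/eqP/negPn/zero_rows.
  by rewrite kermx_eq0 /row_free => /eqP rkB; have := rank_leq_col B; rewrite rkB.
set u := row i (kermx B).
have uB k : \sum_(j < 6) u ord0 j * B j k = 0.
  have : u *m B = 0 by rewrite /u -row_mul mulmx_ker row0.
  by move/(congr1 (fun A : 'M[K]_(1, 5) => A ord0 k)); rewrite !mxE.
have coord (k : 'I_5) (e : 'I_6) : (forall j, B j k = (j == e)%:R) -> u ord0 e = 0.
  move=> Bk; rewrite -(uB k) (bigD1 e) //= big1 ?Bk ?eqxx ?mulr1 ?addr0 // => j je.
  by rewrite Bk (negbTE je) mulr0.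
exists u; split=> //.
- move=> k k3; rewrite -[RHS](uB (Ordinal (ltn_trans k3 (isT : (3 < 5)%N)))).
  by apply: eq_bigr => j _; rewrite [B _ _]mxE /= k3 mulrC.
- by apply: (coord (Ordinal (isT : (3 < 5)%N))) => j; rewrite mxE.
- by apply: (coord (Ordinal (isT : (4 < 5)%N))) => j; rewrite mxE.
Qed.

End Moments.

Section SignMatrices.
Variable K : fieldType.

(* The element of Inv(S) indexed by s, in pi-coordinates: the diagonal matrix
   changing the sign of the coordinates in s. *)
Definition signMx (s : {set 'I_6}) : 'M[K]_6 :=
  diag_mx (\row_j (if j \in s then -1 else 1)).

Lemma signMx_entry m (A : 'M[K]_(m, 6)) s i j :
  (A *m signMx s) i j = if j \in s then - A i j else A i j.
Proof. by rewrite mul_mx_diag !mxE; case: ifP; rewrite ?mulrN1 ?mulr1. Qed.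

Lemma signMx0 : signMx set0 = 1.
Proof. by apply/matrixP => i j; rewrite !mxE inE; case: eqP; rewrite ?mulr1n ?mulr0n. Qed.

Lemma signMxU (s t : {set 'I_6}) :
  [disjoint s & t] -> signMx s * signMx t = signMx (s :|: t).
Proof.
move=> /disjointFr st; rewrite -mulmxE mulmx_diag; congr diag_mx; apply/rowP => j.
rewrite !mxE inE; case: (boolP (j \in s)) => js; last by rewrite mul1r.
by rewrite st // mulr1.
Qed.

Lemma prod_signMx (s : {set 'I_6}) : \prod_(i in s) signMx [set i] = signMx s.
Proof.
rewrite -big_filter; set r := filter _ _.
rewrite -[in RHS](_ : [set i in r] = s); last first.
  by apply/setP => j; rewrite inE mem_filter mem_index_enum andbT.
have : uniq r by rewrite filter_uniq // index_enum_uniq.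
elim: r => [_|i r IHr] /=.
  by rewrite big_nil -signMx0; congr (signMx _); apply/setP => j; rewrite !inE.
case/andP => ir /IHr; rewrite big_cons => ->; rewrite signMxU.
  by congr (signMx _); apply/setP => j; rewrite !inE.
by rewrite disjoints1 inE.
Qed.

Lemma reflection_fixed (w : 'rV[K]_6) (c : K) i :
  (2%:R : K) != 0 -> w = c *: (w *m signMx [set i]) -> w ord0 i != 0 ->
  forall j, j != i -> w ord0 j = 0.
Proof.
move=> char2 wE wi j ji.
have coordE k : w ord0 k = c * (if k == i then - w ord0 k else w ord0 k).
  by rewrite {1}wE mxE signMx_entry inE.
have c_opp : c = -1.
  move: (coordE i); rewrite eqxx mulrN => /eqP; rewrite -addr_eq0.
  rewrite -{1}[w ord0 i]mul1r -mulrDl mulf_eq0 (negbTE wi) orbF addrC addr_eq0.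
  by move/eqP.
move: (coordE j); rewrite (negbTE ji) c_opp mulN1r => /eqP.
by rewrite -subr_eq0 opprK -mulr2n -mulr_natr mulf_eq0 (negbTE char2) orbF => /eqP.
Qed.

End SignMatrices.
Arguments signMx {K} s.

Section PiCoordinates.
Variable K : fieldType.
Variable theta : 'I_6 -> K.
Hypothesis theta_inj : injective theta.

Local Notation P := (piMat theta).

(* The change of coordinates p -> pi is a Vandermonde matrix times a diagonal
   matrix, hence invertible. *)
Lemma piMat_unit : P \in unitmx.
Proof.
have -> : P = Vandermonde 6 (\row_j theta j) *m diag_mx (\row_j (omega theta j)^-1).
  by apply/matrixP => k j; rewrite mul_mx_diag !mxE.
rewrite unitmxE unitfE det_mulmx det_Vandermonde det_diag mulf_neq0 //.
  apply/prodf_neq0 => i _; apply/prodf_neq0 => j ij; rewrite !mxE theta_sub_neq0 //.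
  by rewrite eq_sym neq_ltn ij.
by apply/prodf_neq0 => i _; rewrite mxE invr_eq0 omega_neq0.
Qed.

Lemma invMx_conj s : invMx theta s = P *m signMx s *m invmx P.
Proof.
have conjM : {morph (fun X : 'M[K]_6 => P *m X *m invmx P) : X Y / X * Y}.
  by move=> X Y /=; rewrite -!mulmxE !mulmxA mulmxKV ?piMat_unit.
have conj1 : P *m 1 *m invmx P = 1 by rewrite mulmx1 mulmxV ?piMat_unit.
rewrite -prod_signMx (big_morph _ conjM conj1); apply: eq_bigr => i _.
by rewrite /epsMx; congr (_ *m diag_mx _ *m _); apply/rowP => j; rewrite !mxE inE.
Qed.

Lemma piC_row v j : piC theta v j = (v *m P) ord0 j.
Proof. by rewrite /piC !mxE mulr_suml; apply: eq_bigr => k _; rewrite mxE mulrA. Qed.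

Definition quadric (x : 'rV[K]_6) : Prop := moments theta 3 (fun j => x ord0 j ^+ 2).

Lemma inS_pi x : inS theta (x *m invmx P) <-> x != 0 /\ quadric x.
Proof.
have piE j : piC theta (x *m invmx P) j = x ord0 j by rewrite piC_row mulmxKV ?piMat_unit.
have nz : (x *m invmx P != 0) = (x != 0).
  by rewrite mulmx_free_eq0 // row_free_unit unitmx_inv piMat_unit.
rewrite /inS nz; split=> -[x0 hq]; split=> //.
  by move=> k k3; rewrite -[RHS](hq (Ordinal k3)); apply: eq_bigr => j _; rewrite piE.
by move=> i; rewrite -[RHS](hq i (ltn_ord i)); apply: eq_bigr => j _; rewrite piE.
Qed.

Lemma quadric_sign x s : quadric x -> quadric (x *m signMx s).
Proof.
move=> hq k k3; rewrite -[RHS](hq k k3); apply: eq_bigr => j _.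
by rewrite signMx_entry; case: ifP; rewrite ?sqrrN.
Qed.

End PiCoordinates.

Lemma closed_sqrt (F : closedFieldType) (r : F) : exists x : F, x ^+ 2 = r.
Proof.
have /closed_rootP[x] : size ('X^2 - r%:P : {poly F}) != 1%N by rewrite size_XnsubC.
by rewrite rootE !hornerE subr_eq0 => /eqP; exists x.
Qed.

Section QuadricPoints.
Variable K : closedFieldType.
Variable theta : 'I_6 -> K.
Hypothesis theta_inj : injective theta.

(* For any labelling a, b, c, d, g, h of the six indices there is a point of
   S with pi_c = pi_d = 0 and pi_a <> 0: take square roots of a kernel vector,
   which cannot vanish at a since it would then be supported on {b, g, h}. *)
Lemma quadric_point a b c d g h : b != g -> b != h -> g != h ->
  (forall j, j \in [:: a; b; c; d; g; h]) ->
  exists x : 'rV[K]_6,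
    [/\ quadric theta x, x ord0 c = 0, x ord0 d = 0 & x ord0 a != 0].
Proof.
move=> bg bh gh cover.
have [u [u0 mu uc ud]] := moments3_kernel theta c d.
have ua : u ord0 a != 0.
  apply: contra u0 => /eqP ua; apply/eqP/rowP => j; rewrite mxE.
  apply: (moments3_support3 theta_inj mu bg bh gh) => k kb kg kh.
  move: (cover k); rewrite !inE (negbTE kb) (negbTE kg) (negbTE kh) /= !orbF.
  by case/or3P => /eqP ->.
have [r hr] := fin_all_exists (fun j => closed_sqrt (u ord0 j)).
have sq0 (z : K) : z ^+ 2 = 0 -> z = 0 by move/eqP; rewrite expf_eq0 => /andP[_ /eqP].
exists (\row_j r j); split; rewrite ?mxE.
- by move=> k k3; rewrite -[RHS](mu k k3); apply: eq_bigr => j _; rewrite mxE hr.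
- by apply: sq0; rewrite hr.
- by apply: sq0; rewrite hr.
- by apply: contra ua => /eqP ra; rewrite -hr ra expr0n.
Qed.

End QuadricPoints.

Section CommutingWithInv.
Variable K : closedFieldType.
Variable theta : 'I_6 -> K.
Hypothesis theta_inj : injective theta.
Hypothesis char2 : (2%:R : K) != 0.
Variable M : 'M[K]_6.
Hypothesis M_unit : M \in unitmx.
Hypothesis M_GL : forall v : 'rV[K]_6, inS theta v <-> inS theta (v *m M).
Hypothesis M_comm : forall s v, inS theta v ->
  projEq (v *m invMx theta s *m M) (v *m M *m invMx theta s).

Local Notation P := (piMat theta).

Definition Mpi : 'M[K]_6 := invmx P *m M *m P.

Lemma M_from_Mpi : M = P *m Mpi *m invmx P.
Proof. by rewrite /Mpi !mulmxA mulmxV ?piMat_unit // mul1mx mulmxK ?piMat_unit. Qed.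

Lemma Mpi_unit : Mpi \in unitmx.
Proof. by rewrite !unitmx_mul unitmx_inv piMat_unit // M_unit. Qed.

Lemma Mpi_quadric x : x != 0 -> quadric theta x ->
  x *m Mpi != 0 /\ quadric theta (x *m Mpi).
Proof.
move=> x0 qx; apply/(inS_pi theta_inj).
have -> : x *m Mpi *m invmx P = x *m invmx P *m M.
  by rewrite /Mpi !mulmxA mulmxK ?piMat_unit.
by apply: (proj1 (M_GL _)); apply/(inS_pi theta_inj).
Qed.

Lemma Mpi_sign_comm s x : x != 0 -> quadric theta x ->
  projEq (x *m signMx s *m Mpi) (x *m Mpi *m signMx s).
Proof.
move=> x0 qx; have [c [c0 cE]] := M_comm s (proj2 (inS_pi theta_inj x) (conj x0 qx)).
exists c; split => //.
have toPi A B :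
    x *m invmx P *m (P *m A *m invmx P) *m (P *m B *m invmx P) *m P = x *m A *m B.
  by rewrite !mulmxA !mulmxKV ?mulmxK ?piMat_unit.
rewrite -toPi -M_from_Mpi -(invMx_conj theta_inj) cE -scalemxAl.
by rewrite M_from_Mpi (invMx_conj theta_inj) toPi.
Qed.

(* Points of S with pi_i = 0 are fixed by eps^(i); their images are then
   eps^(i)-eigenvectors on S, and cannot be (-1)-eigenvectors. *)
Lemma Mpi_keeps_zero i x : x != 0 -> quadric theta x -> x ord0 i = 0 ->
  (x *m Mpi) ord0 i = 0.
Proof.
move=> x0 qx xi.
have x_fixed : x *m signMx [set i] = x.
  by apply/rowP => j; rewrite signMx_entry inE; case: eqP => [->|]; rewrite ?xi ?oppr0.
have [c [_ cE]] := Mpi_sign_comm [set i] x0 qx; rewrite x_fixed in cE.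
have [_ qw] := Mpi_quadric x0 qx.
have [//|wi] := eqVneq ((x *m Mpi) ord0 i) 0.
have wj := reflection_fixed char2 cE wi.
have : (x *m Mpi) ord0 i ^+ 2 = 0.
  apply: (moments1_single theta_inj (y := fun j => (x *m Mpi) ord0 j ^+ 2)).
    by move=> k k1; apply: qw; apply: leq_trans k1 _.
  by move=> j ji; rewrite /= wj // expr0n.
by move/eqP; rewrite expf_eq0 (negbTE wi) andbF.
Qed.

(* Mpi is diagonal: for a point x of S with pi_i = 0 and pi_a <> 0, both x and
   eps^(a) x are mapped into pi_i = 0, and their difference is 2 x_a e_a. *)
Lemma Mpi_offdiag a i : a != i -> Mpi a i = 0.
Proof.
move=> ai; have [c [d [g [h [U cover]]]]] := complete_pair ai.
move: U; rewrite /= !inE !negb_or => /and5P[_ _ /and3P[_ cg ch] _ /andP[gh _]].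
have cover' j : j \in [:: a; c; i; d; g; h].
  by move: (cover j); rewrite !inE [(j == i) || _]orbCA.
have [x [qx xi _ xa]] := quadric_point theta_inj cg ch gh cover'.
have x0 : x != 0 by apply: contraNneq xa => ->; rewrite mxE.
pose x' := x *m signMx [set a].
have x'0 : x' != 0.
  apply: contraNneq xa => x'_eq0; move/rowP/(_ a): x'_eq0.
  by rewrite signMx_entry inE eqxx !mxE => /eqP; rewrite oppr_eq0.
have x'i : x' ord0 i = 0 by rewrite signMx_entry inE eq_sym (negbTE ai) xi.
have diff : x - x' = (x ord0 a *+ 2) *: delta_mx 0 a.
  apply/rowP => j; rewrite [LHS]mxE [(- x') _ _]mxE signMx_entry inE !mxE.
  by case: eqP => [->|_]; rewrite ?opprK ?mulr1 ?subrr ?mulr0 // mulr2n.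
have : ((x - x') *m Mpi) ord0 i = 0.
  have qx' : quadric theta x' := quadric_sign [set a] qx.
  rewrite mulmxBl mxE (Mpi_keeps_zero x0 qx xi) mxE.
  by rewrite (Mpi_keeps_zero x'0 qx' x'i) subrr.
rewrite diff -scalemxAl -rowE !mxE => /eqP.
by rewrite -mulr_natl mulf_eq0 mulf_eq0 (negbTE char2) (negbTE xa) /= => /eqP.
Qed.

Lemma Mpi_row (x : 'rV[K]_6) j : (x *m Mpi) ord0 j = x ord0 j * Mpi j j.
Proof.
rewrite mxE (bigD1 j) //= big1 ?addr0 // => l lj.
by rewrite Mpi_offdiag ?mulr0.
Qed.

(* The diagonal entries of Mpi agree up to sign: apply the relation of
   moments3_pair to x^2 and to (x Mpi)^2 for a point x supported on
   {a, b, g, h} with x_b <> 0. *)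
Lemma Mpi_diag_sq a b : Mpi a a ^+ 2 = Mpi b b ^+ 2.
Proof.
have [->|ab] := eqVneq a b; first by [].
have [c [d [g [h [U cover]]]]] := complete_pair ab.
move: U; rewrite /= !inE !negb_or.
move=> /and5P[/and5P[_ _ _ ag ah] /and4P[_ _ bg bh] _ _ /andP[gh _]].
have cover' j : j \in [:: b; a; c; d; g; h].
  by move: (cover j); rewrite !inE [(j == a) || _]orbCA.
have [x [qx xc xd xb]] := quadric_point theta_inj ag ah gh cover'.
have x0 : x != 0 by apply: contraNneq xb => ->; rewrite mxE.
have [_ qxN] := Mpi_quadric x0 qx.
have supp (y : 'I_6 -> K) : (forall j, x ord0 j = 0 -> y j = 0) ->
    forall j, j != a -> j != b -> j != g -> j != h -> y j = 0.
  move=> hy j ja jb jg jh; apply: hy; move: (cover j).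
  rewrite !inE (negbTE ja) (negbTE jb) (negbTE jg) (negbTE jh) /= orbF.
  by case/orP => /eqP ->.
have sq_x j : x ord0 j = 0 -> x ord0 j ^+ 2 = 0 by move=> ->; rewrite expr0n.
have sq_xM j : x ord0 j = 0 -> (x *m Mpi) ord0 j ^+ 2 = 0.
  by move=> xj; rewrite Mpi_row xj mul0r expr0n.
have rel_x := moments3_pair qx ab (supp _ sq_x).
have rel_xM := moments3_pair qxN ab (supp _ sq_xM).
have beta_a :
    beta theta g h a * x ord0 a ^+ 2 = - (beta theta g h b * x ord0 b ^+ 2).
  by apply/eqP; rewrite -addr_eq0 rel_x.
have : beta theta g h b * x ord0 b ^+ 2 * (Mpi b b ^+ 2 - Mpi a a ^+ 2) = 0.
  by rewrite -[RHS]rel_xM !Mpi_row !exprMn [beta _ _ _ a * _]mulrA beta_a; ring.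
move/eqP; rewrite mulf_eq0 mulf_eq0 (negbTE (beta_neq0 theta_inj bg bh)).
by rewrite expf_eq0 (negbTE xb) andbF subr_eq0 => /eqP.
Qed.

Lemma Mpi_signed_scalar :
  exists (l : K) (s : {set 'I_6}), l != 0 /\ Mpi = l *: signMx s.
Proof.
pose l := Mpi ord0 ord0; pose s := [set j | Mpi j j != l].
have diagE j : Mpi j j = if j \in s then - l else l.
  rewrite inE; case: eqP => // /eqP jl; apply/eqP.
  move/eqP: (Mpi_diag_sq j ord0); rewrite -subr_eq0 subr_sqr mulf_eq0.
  by rewrite subr_eq0 (negbTE jl) addr_eq0.
have MpiE : Mpi = l *: signMx s.
  apply/matrixP => i j; rewrite ![in RHS]mxE.
  have [<-|ij] := eqVneq i j; last by rewrite Mpi_offdiag // mulr0n mulr0.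
  by rewrite diagE mulr1n; case: ifP; rewrite ?mulrN1 ?mulr1.
exists l, s; split => //; apply: contraTneq Mpi_unit => l0.
by rewrite MpiE l0 scale0r unitmxE det0 unitr0.
Qed.

Lemma M_in_Inv :
  exists s, forall v, inS theta v -> projEq (v *m M) (v *m invMx theta s).
Proof.
have [l [s [l0 MpiE]]] := Mpi_signed_scalar.
exists s => v _; exists l; split => //.
rewrite M_from_Mpi MpiE -scalemxAr -scalemxAl -scalemxAr.
by rewrite (invMx_conj theta_inj) !mulmxA.
Qed.

End CommutingWithInv.

Theorem mainTheorem11 (K : closedFieldType) (F : {poly K}) (theta : 'I_6 -> K)
  (hchar : (2%:R : K) != 0)
  (hdeg : size F = 7%N)
  (hinj : injective theta)
  (hroots : forall j, root F (theta j))
  (M : 'M[K]_6)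
  (hunit : M \in unitmx)
  (hGL : forall v : 'rV[K]_6, inS theta v <-> inS theta (v *m M))
  (hnotInv : forall s : {set 'I_6},
     ~ (forall v, inS theta v -> projEq (v *m M) (v *m invMx theta s))) :
  exists s : {set 'I_6},
    ~ (forall v, inS theta v ->
         projEq (v *m invMx theta s *m M) (v *m M *m invMx theta s)).
Proof.
apply: NNPP => no_witness.
have comm s v : inS theta v ->
    projEq (v *m invMx theta s *m M) (v *m M *m invMx theta s).
  move=> Sv; apply: NNPP => not_comm.
  by apply: no_witness; exists s => all_comm; apply: not_comm; apply: all_comm.
have [s Ms] := M_in_Inv hinj hchar hunit hGL comm.
exact: hnotInv s Ms.
Qed.
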